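(* Let $R\in(0,\infty)\setminus\{1\}$, $b_1>0$, $b_2>1$, $b_3>0$, with $m,\ell,\varphi,E,O,v,D$ as in the context. Then at every $(q,n)$ with $q>0$ at which both sides are defined, $$O(q,n)=-\frac{(1-R)\,n\,D(q,n)}{2R(1-q)[(1-R)q+R]\,b_1\,[\ell(q)-n]}.$$
   Context: $m(q)=\frac{R(1-R)}{b_1}q^2-\frac{b_3(1-R)}{b_1}q+1$; $\ell(q)=m(q)+\frac{1-R}{b_1}q(1-q)+\frac{(b_2-1)R(1-R)}{b_1}\frac{q}{(1-R)q+R}$; $\varphi(q,n)=b_1(n-1)+(1-R)(b_3-2R)q+(2-b_2)R(1-R)$; $E(q)^2=4R^2(1-R)^2(b_2-1)(1-q)^2$; $O(q,n)=\frac{(1-R)n}{R(1-q)}-\frac{2(1-R)^2qn/R}{2(1-R)(1-q)[(1-R)q+R]-\varphi(q,n)-\mathrm{sgn}(1-R)\sqrt{\varphi(q,n)^2+E(q)^2}}$; $v(q,n)=\varphi(q,n)-\mathrm{sgn}(1-R)\sqrt{\varphi(q,n)^2+E(q)^2}$; $D(q,n)=2b_1[(1-R)q+R][n-m(q)]-q[v(q,n)-v(q,m(q))]$. *)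

From Stdlib Require Import Reals.
Open Scope R_scope.

Definition sgn (x : R) : R :=
  if Rlt_dec 0 x then 1 else if Rlt_dec x 0 then -1 else 0.

Section Fns.
Variables (Rr b1 b2 b3 : R).

Definition mfun (q : R) : R :=
  Rr * (1 - Rr) / b1 * q ^ 2 - b3 * (1 - Rr) / b1 * q + 1.

Definition lfun (q : R) : R :=
  mfun q + (1 - Rr) / b1 * q * (1 - q)
  + (b2 - 1) * Rr * (1 - Rr) / b1 * (q / ((1 - Rr) * q + Rr)).

Definition phi (q n : R) : R :=
  b1 * (n - 1) + (1 - Rr) * (b3 - 2 * Rr) * q + (2 - b2) * Rr * (1 - Rr).

(* E(q)^2; only the square of E enters the formulas *)
Definition E2 (q : R) : R :=
  4 * Rr ^ 2 * (1 - Rr) ^ 2 * (b2 - 1) * (1 - q) ^ 2.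

Definition Oden (q n : R) : R :=
  2 * (1 - Rr) * (1 - q) * ((1 - Rr) * q + Rr) - phi q n
  - sgn (1 - Rr) * sqrt (phi q n ^ 2 + E2 q).

Definition Ofun (q n : R) : R :=
  (1 - Rr) * n / (Rr * (1 - q))
  - (2 * (1 - Rr) ^ 2 * q * n / Rr) / Oden q n.

Definition vfun (q n : R) : R :=
  phi q n - sgn (1 - Rr) * sqrt (phi q n ^ 2 + E2 q).

Definition Dfun (q n : R) : R :=
  2 * b1 * ((1 - Rr) * q + Rr) * (n - mfun q) - q * (vfun q n - vfun q (mfun q)).
End Fns.

(** Write [w = (1-R)q + R], [A = 2(1-R)(1-q)w] and [u = sgn(1-R) sqrt(phi^2 + E^2)],
    so that the denominator of [O] is [A - phi - u] and [A - v(q,n) = A - phi + u].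
    These two are conjugate: since [u^2 = phi^2 + E^2], their product is
    [A(A - 2 phi) - E^2], which a polynomial identity turns into [2 A b1 (l(q) - n)].
    On the other side, at [n = m(q)] the radicand is a perfect square and
    [v(q, m(q)) = -2R(1-R)(b2-1)], whence [D = q(A - v(q,n)) - 2 w b1 (l(q) - n)]. *)

From Stdlib Require Import Reals Lra.
Open Scope R_scope.

Lemma sgn_mul_Rabs (x : R) : sgn x * Rabs x = x.
Proof.
  unfold sgn; destruct (Rlt_dec 0 x) as [Hx | Hx].
  - rewrite Rabs_right by lra; ring.
  - destruct (Rlt_dec x 0) as [Hx' | Hx'].
    + rewrite Rabs_left by lra; ring.
    + replace x with 0 by lra; ring.
Qed.

Lemma sgn_sqr (x : R) : x <> 0 -> sgn x ^ 2 = 1.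
Proof.
  intro Hx; unfold sgn.
  destruct (Rlt_dec 0 x); [ring |].
  destruct (Rlt_dec x 0); [ring | lra].
Qed.

Section Identities.
Variables (Rr b1 b2 b3 : R).

Local Notation w q := ((1 - Rr) * q + Rr).
Local Notation A q := (2 * (1 - Rr) * (1 - q) * w q).

Lemma E2_ge0 (q : R) : 1 <= b2 -> 0 <= E2 Rr b2 q.
Proof.
  intro Hb2; unfold E2.
  assert (0 <= (Rr * (1 - Rr) * (1 - q)) ^ 2) by apply pow2_ge_0.
  replace (4 * Rr ^ 2 * (1 - Rr) ^ 2 * (b2 - 1) * (1 - q) ^ 2)
    with (4 * (b2 - 1) * (Rr * (1 - Rr) * (1 - q)) ^ 2) by ring.
  apply Rmult_le_pos; lra.
Qed.

Lemma phi_mfun (q : R) : b1 <> 0 ->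
  phi Rr b1 b2 b3 q (mfun Rr b1 b3 q) = Rr * (1 - Rr) * ((1 - q) ^ 2 + 1 - b2).
Proof. intro Hb1; unfold phi, mfun; field; exact Hb1. Qed.

Lemma vfun_mfun (q : R) : 0 <= Rr -> b1 <> 0 -> 1 <= b2 ->
  vfun Rr b1 b2 b3 q (mfun Rr b1 b3 q) = -2 * Rr * (1 - Rr) * (b2 - 1).
Proof.
  intros HR Hb1 Hb2; unfold vfun; rewrite phi_mfun by exact Hb1.
  set (k := (1 - q) ^ 2 + b2 - 1).
  assert (Hk : 0 <= k) by (pose proof (pow2_ge_0 (1 - q)); unfold k; lra).
  assert (Hsq : (Rr * (1 - Rr) * ((1 - q) ^ 2 + 1 - b2)) ^ 2 + E2 Rr b2 q
                = Rsqr (Rr * k * (1 - Rr))) by (unfold E2, Rsqr, k; ring).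
  rewrite Hsq, sqrt_Rsqr_abs, Rabs_mult, (Rabs_pos_eq (Rr * k))
    by (apply Rmult_le_pos; assumption).
  replace (sgn (1 - Rr) * (Rr * k * Rabs (1 - Rr)))
    with (Rr * k * (sgn (1 - Rr) * Rabs (1 - Rr))) by ring.
  rewrite sgn_mul_Rabs; unfold k; ring.
Qed.

Lemma Dfun_eq (q n : R) : 0 <= Rr -> b1 <> 0 -> 1 <= b2 -> w q <> 0 ->
  Dfun Rr b1 b2 b3 q n
  = q * (A q - vfun Rr b1 b2 b3 q n) - 2 * w q * b1 * (lfun Rr b1 b2 b3 q - n).
Proof.
  intros HR Hb1 Hb2 Hw; unfold Dfun; rewrite vfun_mfun by assumption.
  unfold lfun, mfun; field; split; assumption.
Qed.

Lemma lfun_sub_identity (q n : R) : b1 <> 0 -> w q <> 0 ->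
  A q * (A q - 2 * phi Rr b1 b2 b3 q n) - E2 Rr b2 q
  = 2 * A q * b1 * (lfun Rr b1 b2 b3 q - n).
Proof. intros Hb1 Hw; unfold phi, E2, lfun, mfun; field; split; assumption. Qed.

Lemma Oden_mul_conj (q n : R) : Rr <> 1 -> b1 <> 0 -> 1 <= b2 -> w q <> 0 ->
  Oden Rr b1 b2 b3 q n * (A q - vfun Rr b1 b2 b3 q n)
  = 2 * A q * b1 * (lfun Rr b1 b2 b3 q - n).
Proof.
  intros HR Hb1 Hb2 Hw; rewrite <- lfun_sub_identity by assumption.
  unfold Oden, vfun.
  set (p := phi Rr b1 b2 b3 q n).
  assert (Hu : (sgn (1 - Rr) * sqrt (p ^ 2 + E2 Rr b2 q)) ^ 2 = p ^ 2 + E2 Rr b2 q).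
  { rewrite Rpow_mult_distr, sgn_sqr, pow2_sqrt by
      (pose proof (pow2_ge_0 p); pose proof (E2_ge0 q Hb2); lra).
    ring. }
  transitivity ((A q - p) ^ 2 - (sgn (1 - Rr) * sqrt (p ^ 2 + E2 Rr b2 q)) ^ 2);
    [ring | rewrite Hu; ring].
Qed.

End Identities.

Theorem lemmaE1 (Rr b1 b2 b3 q n : R) :
  0 < Rr -> Rr <> 1 -> 0 < b1 -> 1 < b2 -> 0 < b3 ->
  0 < q ->
  (* both sides defined *)
  q <> 1 ->
  (1 - Rr) * q + Rr <> 0 ->
  Oden Rr b1 b2 b3 q n <> 0 ->
  lfun Rr b1 b2 b3 q - n <> 0 ->
  Ofun Rr b1 b2 b3 q n =
  - ((1 - Rr) * n * Dfun Rr b1 b2 b3 q n)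
    / (2 * Rr * (1 - q) * ((1 - Rr) * q + Rr) * b1 * (lfun Rr b1 b2 b3 q - n)).
Proof.
  intros HR HR1 Hb1 Hb2 _ _ Hq Hw _ HL.
  pose proof (Oden_mul_conj Rr b1 b2 b3 q n HR1 ltac:(lra) ltac:(lra) Hw) as Hconj.
  rewrite Dfun_eq by lra; unfold Ofun.
  set (a := 2 * (1 - Rr) * (1 - q) * ((1 - Rr) * q + Rr)) in *.
  set (v := vfun Rr b1 b2 b3 q n) in *.
  set (L := lfun Rr b1 b2 b3 q - n) in *.
  assert (Ha : a <> 0) by (repeat apply Rmult_integral_contrapositive_currified; lra).
  assert (Hv : a - v <> 0).
  { intro Hv; rewrite Hv, Rmult_0_r in Hconj; symmetry in Hconj; revert Hconj.
    repeat apply Rmult_integral_contrapositive_currified; lra. }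
  replace (Oden Rr b1 b2 b3 q n) with (2 * a * b1 * L / (a - v))
    by (rewrite <- Hconj; field; exact Hv).
  unfold a in *; field; repeat split; lra.
Qed.
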